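(* For every integer $s\geq 3$, the graph $\operatorname{KG}(2s+2,2)_{s-\operatorname{stab}}$ is a core.
   Context: For integers $s,k\geq 2$ and $n\geq ks$, a subset $S\subseteq[n]=\{1,\dots,n\}$ is $s$-stable if $s\leq |i-j|\leq n-s$ for all distinct $i,j\in S$. The $s$-stable Kneser graph $\operatorname{KG}(n,k)_{s-\operatorname{stab}}$ has as vertices the $s$-stable $k$-subsets of $[n]$, two vertices being adjacent iff they are disjoint. A finite graph $G$ is a core if every homomorphism (edge-preserving map) $G\to G$ is an automorphism of $G$, equivalently $G$ has no proper retract. *)

From mathcomp Require Import all_boot.
Unset Printing Implicit Defensive.

(* Ground set [n] = {1,..,n} is represented by 'I_n (element i stands for i+1);
   differences |i - j| are unaffected by the shift. *)

Definition ndist (i j : nat) : nat := (i - j) + (j - i).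

Definition stable (n s : nat) (S : {set 'I_n}) : bool :=
  [forall i in S, forall j in S,
     (i != j) ==> (s <= ndist i j <= n - s)].

Definition stabKG_vertex (n k s : nat) (S : {set 'I_n}) : bool :=
  (#|S| == k) && stable n s S.

Definition stabKG (n k s : nat) : Type :=
  { S : {set 'I_n} | stabKG_vertex n k s S }.

Definition stabKG_adj (n k s : nat) : rel (stabKG n k s) :=
  fun A B => [disjoint (val A) & (val B)].

Definition is_hom (V : Type) (adj : rel V) (f : V -> V) : Prop :=
  forall x y, adj x y -> adj (f x) (f y).

Definition is_aut (V : Type) (adj : rel V) (f : V -> V) : Prop :=
  bijective f /\ forall x y, adj (f x) (f y) = adj x y.

Definition is_core (V : Type) (adj : rel V) : Prop :=
  forall f : V -> V, is_hom V adj f -> is_aut V adj f.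

From HB Require Import structures.
From mathcomp Require Import all_boot zify.

(* For a point [a], the vertices whose image
   contains [a] form an intersecting family, since [f] preserves disjointness.
   Call [c] and [d] spaced when [{c, d}] is a vertex; for [s >= 3] the spacing
   graph has no triangle, so an intersecting family of two or more vertices lies
   in a star (the 3 vertices through one point).  Counting incidences forces
   each such family to be a whole star, say that of [g a]; hence [f v] is the
   preimage of [v] under [g].  Every edge [{c, d}] then gives
   [|g^-1 c| + |g^-1 d| = 2], and as [c] and [c + 1] have the common spaced
   neighbour [c + 1 + s] (mod [n]) all fibres of [g] have size 1: [g] is a
   bijection and [f] the automorphism it induces. *)

HB.instance Definition _ (n k s : nat) :=
  Finite.copy (stabKG n k s) {S : {set 'I_n} | stabKG_vertex n k s S}.

Lemma sum_card_incidence (T P : finType) (h : T -> {set P}) :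
  \sum_(a : P) #|[set v | a \in h v]| = \sum_(v : T) #|h v|.
Proof.
transitivity (\sum_(a : P) \sum_(v : T) ((a \in h v) : nat)).
  apply: eq_bigr => a _; rewrite -sum1_card big_mkcond /=.
  by apply: eq_bigr => v _; rewrite inE; case: (a \in h v).
rewrite exchange_big /=; apply: eq_bigr => v _.
rewrite -sum1_card [RHS]big_mkcond /=.
by apply: eq_bigr => a _; case: (a \in h v).
Qed.

Lemma stabKG_aut_of_preim {n k s : nat} {f : stabKG n k s -> stabKG n k s}
    {h : 'I_n -> 'I_n} :
  injective h -> (forall v, val (f v) = h @^-1: val v) ->
  is_aut (stabKG n k s) (stabKG_adj n k s) f.
Proof.
move=> h_inj fE; have [h' hK h'K] := injF_bij h_inj.
have {}fE v : val (f v) = h' @: val v by rewrite fE (can2_imset_pre _ h'K hK).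
have f_inj : injective f.
  by move=> x y /(congr1 val); rewrite !fE => /(imset_inj (can_inj h'K))/val_inj.
split; first exact: injF_bij.
by move=> x y; rewrite /stabKG_adj !fE imset_disjoint //; apply: can_inj h'K.
Qed.

Section StableKneser.

Variable s : nat.
Hypothesis s_ge3 : 3 <= s.

Local Notation n := (2 * s + 2).
Local Notation V := (stabKG n 2 s).

Definition spaced (c d : 'I_n) : bool := s <= ndist c d <= s + 2.

Lemma spaced_neq {c d : 'I_n} : spaced c d -> c != d.
Proof. by apply: contraTneq => ->; rewrite /spaced /ndist subnn; lia. Qed.

(* Three pairwise spaced points span at least [2s > s + 2]. *)
Lemma no_spaced_triangle {p u w : 'I_n} :
  spaced p u -> spaced p w -> spaced u w -> False.
Proof.
rewrite /spaced /ndist; have := ltn_ord p; have := ltn_ord u; have := ltn_ord w.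
lia.
Qed.

Lemma vertex_card (v : V) : #|val v| = 2.
Proof. by have /andP[/eqP -> _] := valP v. Qed.

Lemma vertex_spaced (v : V) (c d : 'I_n) :
  c \in val v -> d \in val v -> c != d -> spaced c d.
Proof.
move=> cv dv cd; have /andP[_ /forall_inP/(_ c cv)/forall_inP/(_ d dv)] := valP v.
by move=> /implyP/(_ cd); rewrite /spaced; lia.
Qed.

Lemma spaced_vertex {c d : 'I_n} : spaced c d -> exists v : V, val v = [set c; d].
Proof.
move=> cd; suff cdV : stabKG_vertex n 2 s [set c; d].
  by exists (exist (stabKG_vertex n 2 s) _ cdV).
rewrite /stabKG_vertex cards2 spaced_neq //=.
apply/forall_inP => i; rewrite !inE => /orP[]/eqP ->;
  apply/forall_inP => j; rewrite !inE => /orP[]/eqP ->; rewrite ?eqxx //=;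
  apply/implyP => _; move: cd; rewrite /spaced /ndist; lia.
Qed.

Lemma vertex_other {v : V} {p : 'I_n} :
  p \in val v -> exists2 u, spaced p u & val v = [set p; u].
Proof.
move=> pv; have /cards2P [x [y [xy vE]]] : #|val v| == 2 by rewrite vertex_card.
have [u up vpu] : exists2 u, u != p & val v = [set p; u].
  move: pv; rewrite vE !inE => /orP[]/eqP ->; first by exists y; rewrite // eq_sym.
  by exists x; rewrite // setUC.
by exists u; rewrite // (@vertex_spaced v) ?vpu ?set21 ?set22 // eq_sym.
Qed.

Definition star (p : 'I_n) : {set V} := [set v : V | p \in val v].

Lemma intersecting_sub_star (F : {set V}) :
  {in F &, forall x y : V, ~~ [disjoint val x & val y]} -> 1 < #|F| ->
  exists p, F \subset star p.
Proof.
move=> F_int /card_gt1P [x [y [xF yF xy]]].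
have := F_int x y xF yF; rewrite -setI_eq0 => /set0Pn [p].
rewrite inE => /andP[px py].
exists p; apply/subsetP => t tF; rewrite inE; apply/negPn/negP => pt.
have [u pu xE] := vertex_other px; have [w pw yE] := vertex_other py.
have meets z q : z \in F -> val z = [set p; q] -> q \in val t.
  move=> zF zE; have := F_int z t zF tF; rewrite -setI_eq0 => /set0Pn [r].
  by rewrite inE zE !inE => /andP[/orP[]/eqP-> rt] //; rewrite rt in pt.
have uw : u != w by apply: contraNneq xy => uw; apply/eqP/val_inj; rewrite xE yE uw.
apply: (no_spaced_triangle pu pw); apply: (vertex_spaced t) => //.
  exact: meets xE.
exact: meets yE.
Qed.

Lemma n_gt0 : 0 < n. Proof. lia. Qed.

Definition shift (k : nat) (c : 'I_n) : 'I_n := Ordinal (ltn_pmod (c + k) n_gt0).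

Lemma shiftE (k : nat) (c : 'I_n) : k <= n ->
  val (shift k c) = if c + k < n then c + k else c + k - n.
Proof.
move=> kn /=; have := ltn_ord c; case: ifP => cn c_lt; first by rewrite modn_small.
have {1}-> : c + k = c + k - n + n by lia.
by rewrite modnDr modn_small; lia.
Qed.

Lemma spaced_set (p : 'I_n) :
  [set q | spaced p q] = shift s p |: [set shift s.+1 p; shift s.+2 p].
Proof.
apply/setP => q; rewrite !inE -!val_eqE !shiftE /= /spaced /ndist; try lia.
by have := ltn_ord p; have := ltn_ord q; do 3 case: ifP => ?; lia.
Qed.

Lemma spaced_shift (c : 'I_n) : spaced c (shift s c).
Proof.
have := setU11 (shift s c) [set shift s.+1 c; shift s.+2 c].
by rewrite -spaced_set inE.
Qed.

Lemma card_spaced_set (p : 'I_n) : #|[set q | spaced p q]| = 3.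
Proof.
rewrite spaced_set cardsU1 cards2 !inE -!val_eqE !shiftE /=; try lia.
by have := ltn_ord p; do 3 case: ifP => ?; lia.
Qed.

Lemma star_card (p : 'I_n) : #|star p| = 3.
Proof.
have pair_inj : {in [set q | spaced p q] &, injective (fun q => [set p; q])}.
  move=> q q'; rewrite inE => /spaced_neq pq _ /= /setP/(_ q).
  by rewrite !inE eqxx orbT eq_sym (negbTE pq) => /esym/eqP.
rewrite -(card_spaced_set p) -(card_imset (star p) val_inj).
rewrite -(card_in_imset pair_inj).
apply: eq_card => A; apply/imsetP/imsetP.
  by case=> v; rewrite inE => /vertex_other[q pq ->] ->; exists q; rewrite ?inE.
case=> q; rewrite inE => /spaced_vertex[v vE] ->.
by exists v; rewrite // inE vE set21.
Qed.

Variable f : V -> V.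
Hypothesis f_hom : is_hom V (stabKG_adj n 2 s) f.

Lemma preim_star_intersecting (a : 'I_n) :
  {in f @^-1: star a &, forall x y : V, ~~ [disjoint val x & val y]}.
Proof.
move=> x y; rewrite !inE => ax ay; apply/negP => /f_hom/disjointFr/(_ ax).
by rewrite ay.
Qed.

Lemma card_preim_star_le (a : 'I_n) : #|f @^-1: star a| <= 3.
Proof.
case: (leqP #|f @^-1: star a| 1) => [le1 | gt1]; first exact: leq_trans le1 _.
have [p /subset_leq_card] := intersecting_sub_star _ (preim_star_intersecting a) gt1.
by rewrite star_card.
Qed.

Lemma sum_card_preim_star : \sum_a #|f @^-1: star a| = \sum_(a : 'I_n) 3.
Proof.
transitivity (\sum_(v : V) #|val (f v)|).
  rewrite -[RHS]sum_card_incidence; apply: eq_bigr => a _.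
  by apply: eq_card => v; rewrite !inE.
transitivity (\sum_(v : V) #|val v|).
  by apply: eq_bigr => v _; rewrite !vertex_card.
by rewrite -sum_card_incidence; apply: eq_bigr => p _; exact: star_card.
Qed.

Lemma card_preim_star (a : 'I_n) : #|f @^-1: star a| = 3.
Proof.
have [_] := leqif_sum (fun a (_ : predT a) => leqif_eq (card_preim_star_le a)).
by rewrite sum_card_preim_star eqxx => /esym/forall_inP/(_ a isT)/eqP.
Qed.

Definition point_map (a : 'I_n) : 'I_n :=
  odflt a [pick p | f @^-1: star a \subset star p].

Lemma preim_star (a : 'I_n) : f @^-1: star a = star (point_map a).
Proof.
have [p sub] : exists p, f @^-1: star a \subset star p.
  apply: (intersecting_sub_star _ (preim_star_intersecting a)).
  by rewrite card_preim_star.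
rewrite /point_map; case: pickP => [q sub' | /(_ p)]; last by rewrite sub.
by apply/eqP; rewrite eqEcard sub' card_preim_star star_card.
Qed.

Lemma hom_preim (v : V) : val (f v) = point_map @^-1: val v.
Proof. by apply/setP => a; have /setP/(_ v) := preim_star a; rewrite !inE. Qed.

Lemma card_preim_spaced {c d : 'I_n} : spaced c d ->
  #|point_map @^-1: [set c]| + #|point_map @^-1: [set d]| = 2.
Proof.
move=> cd; have [v vE] := spaced_vertex cd.
rewrite -[RHS](vertex_card (f v)) hom_preim vE preimsetU cardsU -preimsetI.
by rewrite disjoint_setI0 ?preimset0 ?cards0 ?subn0 // disjoints1 inE spaced_neq.
Qed.

Lemma card_preim_succ (c d : 'I_n) : d = c.+1 :> nat ->
  #|point_map @^-1: [set c]| = #|point_map @^-1: [set d]|.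
Proof.
move=> dE; have sp_c : spaced c (shift s d).
  by rewrite /spaced /ndist shiftE /=; have := ltn_ord d; try lia; case: ifP; lia.
have := card_preim_spaced (spaced_shift d).
by have := card_preim_spaced sp_c; lia.
Qed.

Lemma card_preim_point (c : 'I_n) : #|point_map @^-1: [set c]| = 1.
Proof.
pose N d := #|point_map @^-1: [set d]|.
have N_const (d : 'I_n) : N d = N (Ordinal n_gt0).
  case: d => m; elim: m => [|m IH] m_lt; first by congr N; apply: val_inj.
  by rewrite -(IH (ltnW m_lt)); apply/esym/card_preim_succ.
have := card_preim_spaced (spaced_shift c).
by rewrite -/(N c) -/(N (shift s c)) (N_const c) (N_const (shift s c)); lia.
Qed.

Lemma point_map_inj : injective point_map.
Proof.
move=> a b ab.
have /card_le1_eqP le1 : #|point_map @^-1: [set point_map a]| <= 1.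
  by rewrite card_preim_point.
by apply: le1; rewrite !inE ?ab.
Qed.

End StableKneser.

Theorem mainTheorem4 (s : nat) : 3 <= s ->
  is_core (stabKG (2 * s + 2) 2 s) (stabKG_adj (2 * s + 2) 2 s).
Proof.
move=> s_ge3 f f_hom.
apply: (stabKG_aut_of_preim (point_map_inj _ s_ge3 _ f_hom)).
exact: hom_preim.
Qed.
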